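(* Let $\gamma\in\{0,1,\dots,5\}$ and $\mathfrak{q}_\gamma=\frac94\sum_{\nu=0}^{2\gamma}(\overline{\mathfrak{C}}_{\gamma\gamma\nu})^2\left(\frac2{\omega_\nu^2}+\frac1{\omega_\nu^2-(2\omega_\gamma)^2}\right)$. Then $8\mathfrak{q}_\gamma>3\mathfrak{C}_{\gamma\gamma\gamma\gamma}$. Moreover, if $\xi=\{\xi^m\}_{m\ge0}$ with $\xi^m=\mathfrak{K}_\gamma\mathbf{1}(m=\gamma)$ and $\mathfrak{K}_\gamma=\pm2\omega_\gamma\sqrt{\frac{2}{8\mathfrak{q}_\gamma-3\mathfrak{C}_{\gamma\gamma\gamma\gamma}}}$, then $\mathfrak{M}_-(\xi)=0$.
   Context: $\omega_n=n+2$; $\mathfrak{e}_n(x)=\mathfrak{N}_nP_n^{(3/2,3/2)}(\cos x)$ with $P_n^{(3/2,3/2)}$ the Jacobi polynomial and $\mathfrak{N}_n=\frac{\sqrt{\omega_n\Gamma(1+n)\Gamma(4+n)}}{2\sqrt2\,\Gamma(5/2+n)}$; $\overline{\mathfrak{C}}_{ijm}=\int_0^\pi\mathfrak{e}_i\mathfrak{e}_j\mathfrak{e}_m\sin^4x\,dx$, $\mathfrak{C}_{ijkm}=\int_0^\pi\mathfrak{e}_i\mathfrak{e}_j\mathfrak{e}_k\mathfrak{e}_m\sin^6x\,dx$. $(\mathfrak{A}\xi)^m=\omega_m^2\xi^m$, $(\mathfrak{f}^{(3)}(u))^m=-\sum_{i,j,k}\mathfrak{C}_{ijkm}u^iu^ju^k$,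 $\Phi^t(\xi)=\{\xi^n\cos(\omega_nt)\}_n$, $\langle\mathfrak{f}^{(3)}\rangle(\xi)=\frac1{2\pi}\int_0^{2\pi}\Phi^t[\mathfrak{f}^{(3)}(\Phi^t(\xi))]dt$, and $\mathfrak{M}_-(\xi)=-\mathfrak{A}\xi+\langle\mathfrak{f}^{(3)}\rangle(\xi)+\mathfrak{F}_0(\xi)$ with $(\mathfrak{F}_0(\xi))^m=\frac94\sum_{\kappa,\nu\ge0}\overline{\mathfrak{C}}_{\kappa\nu m}\sum_{i,j\ge0,\ \omega_i-\omega_j\ne\pm\omega_\nu}\frac{\overline{\mathfrak{C}}_{ij\nu}}{\omega_\nu^2-(\omega_i-\omega_j)^2}\xi^i\xi^j\xi^\kappa\sum_\pm\mathbf{1}(\omega_i-\omega_j\pm\omega_\kappa\pm\omega_m=0)+\frac94\sum_{\kappa,\nu\ge0}\overline{\mathfrak{C}}_{\kappa\nu m}\sum_{i,j\ge0,\ \omega_i+\omega_j\ne\pm\omega_\nu}\frac{\overline{\mathfrak{C}}_{ij\nu}}{\omega_\nu^2-(\omega_i+\omega_j)^2}\xi^i\xi^j\xi^\kappa\sum_\pm\mathbf{1}(\omega_i+\omega_j\pm\omega_\kappa\pm\omega_m=0)$. *)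

From Stdlib Require Import Reals Lra.
From Coquelicot Require Import Coquelicot.
Open Scope R_scope.

Definition omega (n : nat) : R := INR n + 2.

Definition Gamma (x : R) : R :=
  RInt_gen (fun t => Rpower t (x - 1) * exp (- t)) (at_right 0) (Rbar_locally p_infty).

Fixpoint falling (r : R) (k : nat) : R :=
  match k with O => 1 | S k' => falling r k' * (r - INR k') end.
Definition gen_binom (r : R) (k : nat) : R := falling r k / INR (Factorial.fact k).

(* Jacobi polynomial P_n^(a,b)(x) (DLMF 18.5.8):
   sum_{s=0}^n binom(n+a, n-s) binom(n+b, s) ((x-1)/2)^s ((x+1)/2)^(n-s) *)
Definition jacobi (a b : R) (n : nat) (x : R) : R :=
  sum_n (fun s => gen_binom (INR n + a) (n - s) * gen_binom (INR n + b) s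
                  * ((x - 1) / 2) ^ s * ((x + 1) / 2) ^ (n - s)) n.

Definition Nfrak (n : nat) : R :=
  sqrt (omega n * Gamma (1 + INR n) * Gamma (4 + INR n))
  / (2 * sqrt 2 * Gamma (5 / 2 + INR n)).

Definition efrak (n : nat) (x : R) : R := Nfrak n * jacobi (3 / 2) (3 / 2) n (cos x).

Definition Cbar (i j m : nat) : R :=
  RInt (fun x => efrak i x * efrak j x * efrak m x * sin x ^ 4) 0 PI.

Definition C4 (i j k m : nat) : R :=
  RInt (fun x => efrak i x * efrak j x * efrak k x * efrak m x * sin x ^ 6) 0 PI.

Definition seqR := nat -> R.

Definition Aop (xi : seqR) : seqR := fun m => omega m ^ 2 * xi m.

Definition f3 (u : seqR) : seqR := fun m =>
  - Series (fun i => Series (fun j => Series (fun k => C4 i j k m * u i * u j * u k))).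

Definition Phi (t : R) (xi : seqR) : seqR := fun n => xi n * cos (omega n * t).

Definition avg_f3 (xi : seqR) : seqR := fun m =>
  / (2 * PI) * RInt (fun t => Phi t (f3 (Phi t xi)) m) 0 (2 * PI).

Definition ind0 (x : R) : R := if Req_EM_T x 0 then 1 else 0.

Definition sum_pm (a b c : R) : R :=
  ind0 (a + b + c) + ind0 (a + b - c) + ind0 (a - b + c) + ind0 (a - b - c).

(* 1/(omega_nu^2 - d^2) restricted to d <> +- omega_nu (0 on the excluded terms) *)
Definition res_coef (nu : nat) (d : R) : R :=
  if Req_EM_T d (omega nu) then 0
  else if Req_EM_T d (- omega nu) then 0
  else / (omega nu ^ 2 - d ^ 2).

Definition F0 (xi : seqR) : seqR := fun m =>
  9 / 4 * Series (fun kappa => Series (fun nu => Cbar kappa nu m *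
     Series (fun i => Series (fun j =>
        res_coef nu (omega i - omega j) * Cbar i j nu * xi i * xi j * xi kappa
        * sum_pm (omega i - omega j) (omega kappa) (omega m))))) +
  9 / 4 * Series (fun kappa => Series (fun nu => Cbar kappa nu m *
     Series (fun i => Series (fun j =>
        res_coef nu (omega i + omega j) * Cbar i j nu * xi i * xi j * xi kappa
        * sum_pm (omega i + omega j) (omega kappa) (omega m))))).

Definition M_minus (xi : seqR) : seqR := fun m =>
  - Aop xi m + avg_f3 xi m + F0 xi m.

Definition qfrak (g : nat) : R :=
  9 / 4 * sum_n (fun nu => Cbar g g nu ^ 2 *
     (2 / omega nu ^ 2 + 1 / (omega nu ^ 2 - (2 * omega g) ^ 2))) (2 * g).

(* Write P_n for the Jacobi polynomial P_n^(3/2,3/2), which has rational coefficients.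
   In the variable y = cos x the P_n are orthogonal for the weight sin^4 x dx on [0, PI]:
   Green's identity for the Jacobi operator gives a two-term recurrence for the moments
   int_0^PI P_n(cos x) cos^k x sin^4 x dx, which vanish for k < n and, for n = 0, are
   rational multiples of PI.  Hence each Cbar_ijm and C_ijkm is a product of normalisations
   times PI times an exactly computable rational, and vanishes as soon as the last index
   exceeds the degree of the product of the other factors.  Since Gamma(1+n) = n! and
   Gamma(5/2+n) = Gamma(5/2) (5/2)_n, the squared normalisations are rationals divided by
   Gamma(5/2)^2, so 8 q_g > 3 C_gggg reduces, via PI > 3 and Gamma(5/2) <= 83/50, to an
   inequality between rationals, checked by computation for g <= 5.
   For the single mode xi = K e_g, only the resonances m = g and m = 3g+4 survive in M_-;
   at m = 3g+4 the coefficients vanish by orthogonality, and at m = g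
   M_-(xi) = K (K^2 (q_g - 3/8 C_gggg) - omega_g^2), which is zero for the given K. *)

From Stdlib Require Import Reals Lra Lia ZArith QArith Qreals List.
From Stdlib Require Classical_Prop.
From Coquelicot Require Import Coquelicot.
Open Scope R_scope.

Lemma sum_n_eq0 (a : nat -> R) n : (forall k, (k <= n)%nat -> a k = 0) -> sum_n a n = 0.
Proof.
  induction n as [|n IH]; intro H.
  - rewrite sum_O. apply H. lia.
  - rewrite sum_Sn, IH by (intros; apply H; lia). rewrite H by lia. unfold plus; simpl; ring.
Qed.

Lemma sum_n_plus_R (u v : nat -> R) n : sum_n u n + sum_n v n = sum_n (fun k => u k + v k) n.
Proof. symmetry. apply (sum_n_plus (G := R_AbelianMonoid)). Qed.

Lemma sum_n_scal_R c (u : nat -> R) n : c * sum_n u n = sum_n (fun k => c * u k) n.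
Proof. symmetry. apply (sum_n_mult_l (K := R_Ring)). Qed.

Lemma is_derive_eq (f : R -> R) x l l' : is_derive f x l -> l = l' -> is_derive f x l'.
Proof. intros H <-. exact H. Qed.

Lemma Series_finite (a : nat -> R) N : (forall k, (N < k)%nat -> a k = 0) -> Series a = sum_n a N.
Proof.
  intro H. apply is_series_unique. apply (filterlim_ext_loc (fun _ => sum_n a N)).
  - exists N. intros n Hn. induction Hn as [|n Hn IH]; [reflexivity|].
    rewrite sum_Sn, <- IH, H by lia. unfold plus; simpl. symmetry; apply Rplus_0_r.
  - apply filterlim_const.
Qed.

Lemma Series_single (a : nat -> R) g : (forall k, k <> g -> a k = 0) -> Series a = a g.
Proof.
  intro H. rewrite (Series_finite a g) by (intros; apply H; lia).
  destruct g as [|g]; [apply sum_O|].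
  rewrite sum_Sn, sum_n_eq0 by (intros; apply H; lia). unfold plus; simpl; ring.
Qed.

Lemma Series2_single g (F : nat -> nat -> R) :
  (forall i j, i <> g \/ j <> g -> F i j = 0) ->
  Series (fun i => Series (fun j => F i j)) = F g g.
Proof.
  intro H. rewrite (Series_ext _ (fun i => F i g)).
  - apply (Series_single (fun i => F i g)). intros; apply H; auto.
  - intro i. apply (Series_single (F i)). intros; apply H; auto.
Qed.

Lemma Series3_single g (F : nat -> nat -> nat -> R) :
  (forall i j k, i <> g \/ j <> g \/ k <> g -> F i j k = 0) ->
  Series (fun i => Series (fun j => Series (fun k => F i j k))) = F g g g.
Proof.
  intro H. rewrite (Series_ext _ (fun i => Series (fun j => F i j g))).
  - apply (Series2_single g (fun i j => F i j g)). intros i j [Hi|Hj]; apply H; auto.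
  - intro i. apply Series_ext. intro j. apply (Series_single (F i j)). intros; apply H; auto.
Qed.

Lemma Series4_single g N (C : nat -> nat -> R) (F : nat -> nat -> nat -> nat -> R) :
  (forall k nu i j, i <> g \/ j <> g \/ k <> g -> F k nu i j = 0) ->
  (forall nu, (N < nu)%nat -> C g nu * F g nu g g = 0) ->
  Series (fun k => Series (fun nu => C k nu * Series (fun i => Series (fun j => F k nu i j))))
  = sum_n (fun nu => C g nu * F g nu g g) N.
Proof.
  intros H HN.
  rewrite (Series_ext _ (fun k => Series (fun nu => C k nu * F k nu g g))).
  2:{ intro k. apply Series_ext. intro nu. f_equal.
      apply Series2_single. intros i j [Hi|Hj]; apply H; auto. }
  rewrite (Series_single _ g).
  - apply Series_finite, HN.
  - intros k Hk. rewrite (Series_ext _ (fun _ => 0)).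
    + rewrite (Series_single _ O); reflexivity.
    + intro nu. rewrite H by auto. apply Rmult_0_r.
Qed.

(** * Polynomials with rational coefficients *)

Arguments Qred : simpl never.
Arguments Q2R : simpl never.

(* Coefficient lists, constant term first. *)
Fixpoint peval (p : list Q) (y : R) : R :=
  match p with nil => 0 | c :: p' => Q2R c + y * peval p' y end.

Fixpoint padd (p q : list Q) : list Q :=
  match p, q with
  | nil, _ => q
  | _, nil => p
  | a :: p', b :: q' => Qred (a + b) :: padd p' q'
  end.

Definition pscal (c : Q) (p : list Q) : list Q := map (fun a => Qred (c * a)) p.

Fixpoint pmul (p q : list Q) : list Q :=
  match p with nil => nil | a :: p' => padd (pscal a q) (0%Q :: pmul p' q) end.

Fixpoint ppow (p : list Q) (n : nat) : list Q :=
  match n with O => 1%Q :: nil | S n' => pmul p (ppow p n') end.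

Fixpoint psum (F : nat -> list Q) (n : nat) : list Q :=
  match n with O => F O | S n' => padd (psum F n') (F (S n')) end.

Lemma Q2R_Qred x : Q2R (Qred x) = Q2R x.
Proof. apply Qeq_eqR, Qred_correct. Qed.

Lemma Q2R_lit (a : Z) (b : positive) : Q2R (a # b) = IZR a / IZR (Zpos b).
Proof. reflexivity. Qed.

Lemma peval_add p q y : peval (padd p q) y = peval p y + peval q y.
Proof.
  revert q; induction p as [|a p IH]; intros [|b q]; simpl; try ring.
  rewrite IH, Q2R_Qred, Q2R_plus; ring.
Qed.

Lemma peval_scal c p y : peval (pscal c p) y = Q2R c * peval p y.
Proof.
  induction p as [|a p IH]; simpl; [ring|].
  rewrite IH, Q2R_Qred, Q2R_mult; ring.
Qed.

Lemma peval_mul p q y : peval (pmul p q) y = peval p y * peval q y.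
Proof.
  induction p as [|a p IH]; simpl; [ring|].
  rewrite peval_add, peval_scal; simpl. rewrite IH, RMicromega.Q2R_0; ring.
Qed.

Lemma peval_pow p n y : peval (ppow p n) y = peval p y ^ n.
Proof.
  induction n as [|n IH]; simpl.
  - rewrite RMicromega.Q2R_1; ring.
  - rewrite peval_mul, IH; ring.
Qed.

Lemma peval_sum F n y : peval (psum F n) y = sum_n (fun s => peval (F s) y) n.
Proof.
  induction n as [|n IH]; simpl.
  - rewrite sum_O; reflexivity.
  - rewrite sum_Sn, peval_add, IH; reflexivity.
Qed.

Lemma ex_derive_peval p y : ex_derive (peval p) y.
Proof.
  induction p as [|c p IH]; simpl.
  - apply ex_derive_const.
  - apply (ex_derive_plus (fun _ => Q2R c) (fun y => y * peval p y)).
    + apply ex_derive_const.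
    + apply (ex_derive_mult (fun y => y) (peval p)); [apply ex_derive_id|exact IH].
Qed.

(* [length p <= S d] says that [p] has degree at most [d]. *)

Lemma length_padd p q : length (padd p q) = Nat.max (length p) (length q).
Proof.
  revert q; induction p as [|a p IH]; intros [|b q]; simpl; auto.
Qed.

Lemma length_pmul p q d e :
  (length p <= S d)%nat -> (length q <= S e)%nat -> (length (pmul p q) <= S (d + e))%nat.
Proof.
  revert d; induction p as [|a p IH]; intros d Hp Hq; simpl in *; [lia|].
  rewrite length_padd. unfold pscal. rewrite length_map. simpl.
  apply Nat.max_lub; [lia|]. destruct d as [|d].
  - destruct p; simpl in *; lia.
  - specialize (IH d ltac:(lia) Hq). lia.
Qed.

Lemma length_ppow p d n : (length p <= S d)%nat -> (length (ppow p n) <= S (n * d))%nat.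
Proof.
  intro Hp. induction n as [|n IH]; simpl; [lia|].
  apply (length_pmul _ _ _ _ Hp IH).
Qed.

Lemma length_psum F n b : (forall s, (s <= n)%nat -> (length (F s) <= b)%nat) ->
  (length (psum F n) <= b)%nat.
Proof.
  induction n as [|n IH]; intro H; simpl; [apply H; lia|].
  rewrite length_padd. apply Nat.max_lub; [apply IH|]; intros; apply H; lia.
Qed.

(** * The Jacobi differential equation *)

Definition mon (s t : nat) (y : R) : R := ((y - 1) / 2) ^ s * ((y + 1) / 2) ^ t.
Definition mon' (s t : nat) (y : R) : R :=
  / 2 * (INR s * mon (pred s) t y + INR t * mon s (pred t) y).
Definition mon'' (s t : nat) (y : R) : R :=
  / 2 * (INR s * mon' (pred s) t y + INR t * mon' s (pred t) y).

Lemma is_derive_mon s t y : is_derive (mon s t) y (mon' s t y).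
Proof. unfold mon', mon. auto_derive; [easy|]. unfold Rdiv, Rminus. field. Qed.

Lemma is_derive_mon' s t y : is_derive (mon' s t) y (mon'' s t y).
Proof.
  unfold mon' at 1. unfold mon''.
  apply (is_derive_ext (fun y => / 2 * (INR s * mon (pred s) t y + INR t * mon s (pred t) y))); [easy|].
  apply (is_derive_scal (fun y => INR s * mon (pred s) t y + INR t * mon s (pred t) y)).
  apply (is_derive_plus (fun y => INR s * mon (pred s) t y) (fun y => INR t * mon s (pred t) y));
    apply is_derive_scal, is_derive_mon.
Qed.

(* With [u = (y-1)/2] and [v = (y+1)/2] one has [1 - y^2 = -4uv], [y = u + v], [v - u = 1]. *)
Lemma mon_ode a b s t y :
  (1 - y ^ 2) * mon'' s t y + (b - a - (a + b + 2) * y) * mon' s t y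
  + (INR s + INR t) * (INR s + INR t + a + b + 1) * mon s t y
  = (INR s * (INR s + a) + INR t * (INR t + b)) * mon s t y
    - INR s * (INR s + a) * mon (pred s) (S t) y
    - INR t * (INR t + b) * mon (S s) (pred t) y.
Proof.
  unfold mon'', mon', mon.
  destruct s as [|[|s]]; destruct t as [|[|t]]; simpl pred; rewrite ?S_INR; simpl INR; simpl pow;
    field.
Qed.

Lemma gen_binom_S r k : gen_binom r (S k) * INR (S k) = gen_binom r k * (r - INR k).
Proof.
  unfold gen_binom. simpl falling.
  change (Factorial.fact (S k)) with (S k * Factorial.fact k)%nat. rewrite mult_INR.
  assert (INR (Factorial.fact k) <> 0) by (apply not_0_INR; pose proof (Factorial.lt_O_fact k); lia).
  assert (INR (S k) <> 0) by (apply not_0_INR; lia).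
  field; auto.
Qed.

Definition jacobi_coef (a b : R) (n s : nat) : R :=
  gen_binom (INR n + a) (n - s) * gen_binom (INR n + b) s.

Lemma jacobi_coef_S a b n j : (j < n)%nat ->
  jacobi_coef a b n (S j) * INR (S j) * (INR (S j) + a)
  = jacobi_coef a b n j * INR (n - j) * (INR (n - j) + b).
Proof.
  intro Hj. unfold jacobi_coef.
  remember (n - S j)%nat as m.
  replace (n - j)%nat with (S m) by lia.
  assert (Hn : INR n = INR m + INR j + 1) by (rewrite <- plus_INR, <- S_INR; f_equal; lia).
  pose proof (gen_binom_S (INR n + b) j) as Eb.
  pose proof (gen_binom_S (INR n + a) m) as Ea.
  transitivity (gen_binom (INR n + a) m * (gen_binom (INR n + b) (S j) * INR (S j))
                * (INR (S j) + a)); [ring|].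
  rewrite Eb.
  transitivity (gen_binom (INR n + a) (S m) * INR (S m) * gen_binom (INR n + b) j
                * (INR (S m) + b)); [|ring].
  rewrite Ea, !S_INR, Hn. ring.
Qed.

Definition jacobi' (a b : R) (n : nat) (y : R) : R :=
  sum_n (fun s => jacobi_coef a b n s * mon' s (n - s) y) n.
Definition jacobi'' (a b : R) (n : nat) (y : R) : R :=
  sum_n (fun s => jacobi_coef a b n s * mon'' s (n - s) y) n.

Lemma jacobi_mon a b n y : jacobi a b n y = sum_n (fun s => jacobi_coef a b n s * mon s (n - s) y) n.
Proof. apply sum_n_ext; intro s. apply Rmult_assoc. Qed.

Lemma is_derive_jacobi a b n y : is_derive (jacobi a b n) y (jacobi' a b n y).
Proof.
  apply (is_derive_ext (fun y => sum_n (fun s => jacobi_coef a b n s * mon s (n - s) y) n)).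
  { intro z. symmetry. apply jacobi_mon. }
  apply (is_derive_sum_n (fun s y => jacobi_coef a b n s * mon s (n - s) y)).
  intros s _. apply is_derive_scal, is_derive_mon.
Qed.

Lemma is_derive_jacobi' a b n y : is_derive (jacobi' a b n) y (jacobi'' a b n y).
Proof.
  apply (is_derive_sum_n (fun s y => jacobi_coef a b n s * mon' s (n - s) y)).
  intros s _. apply is_derive_scal, is_derive_mon'.
Qed.

Lemma sum_n_telescope2 (f g : nat -> R) n :
  sum_n (fun s => (f (S s) - f s) + (g s - g (S s))) n = f (S n) - f O + g O - g (S n).
Proof.
  induction n as [|n IH]; [rewrite sum_O; simpl; ring|].
  rewrite sum_Sn, IH. unfold plus; simpl. ring.
Qed.

Lemma jacobi_ode a b n y :
  (1 - y ^ 2) * jacobi'' a b n y + (b - a - (a + b + 2) * y) * jacobi' a b n y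
  + INR n * (INR n + a + b + 1) * jacobi a b n y = 0.
Proof.
  unfold jacobi'', jacobi'. rewrite jacobi_mon, !sum_n_scal_R, !sum_n_plus_R.
  set (c := jacobi_coef a b n).
  (* The three-term right-hand side of [mon_ode] telescopes along the sum. *)
  set (E := fun k => match k with
                     | O => 0
                     | S j => c j * INR (n - j) * (INR (n - j) + b) * mon j (n - j) y
                     end).
  set (F := fun k => if (k <=? n)%nat then c k * INR k * (INR k + a) * mon k (n - k) y else 0).
  transitivity (sum_n (fun s => (E (S s) - E s) + (F s - F (S s))) n).
  - apply sum_n_ext_loc. intros s Hs. simpl.
    assert (Hn : INR n = INR s + INR (n - s)) by (rewrite <- plus_INR; f_equal; lia).
    transitivity (c s * ((1 - y ^ 2) * mon'' s (n - s) y
      + (b - a - (a + b + 2) * y) * mon' s (n - s) y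
      + (INR s + INR (n - s)) * (INR s + INR (n - s) + a + b + 1) * mon s (n - s) y));
      [rewrite <- Hn; ring|].
    rewrite mon_ode.
    assert (Es : E s = c s * INR s * (INR s + a) * mon (pred s) (S (n - s)) y).
    { destruct s as [|j]; [simpl; ring|].
      unfold E, c. rewrite <- jacobi_coef_S by lia. simpl pred.
      replace (S (n - S j)) with (n - j)%nat by lia. reflexivity. }
    assert (FSs : F (S s) = c s * INR (n - s) * (INR (n - s) + b) * mon (S s) (pred (n - s)) y).
    { unfold F. destruct (Nat.leb_spec (S s) n).
      - unfold c. rewrite jacobi_coef_S by lia.
        replace (pred (n - s)) with (n - S s)%nat by lia. reflexivity.
      - replace (n - s)%nat with O by lia. simpl. ring. }
    assert (Fs : F s = c s * INR s * (INR s + a) * mon s (n - s) y).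
    { unfold F. destruct (Nat.leb_spec s n); [reflexivity|lia]. }
    rewrite Es, FSs, Fs. simpl E. ring.
  - rewrite sum_n_telescope2. unfold E, F.
    rewrite Nat.sub_diag. destruct (Nat.leb_spec (S n) n); [lia|].
    destruct (Nat.leb_spec 0 n); [|lia]. simpl INR. ring.
Qed.

(** * Rational coefficients of [jacobi] *)

Definition natQ (n : nat) : Q := inject_Z (Z.of_nat n).

Fixpoint factQ (n : nat) : Q :=
  match n with O => 1%Q | S n' => (natQ n * factQ n')%Q end.

Fixpoint fallingQ (r : Q) (k : nat) : Q :=
  match k with O => 1%Q | S k' => (fallingQ r k' * (r - natQ k'))%Q end.

Definition gen_binomQ (r : Q) (k : nat) : Q := (fallingQ r k / factQ k)%Q.

Definition jacobiQ (a b : Q) (n : nat) : list Q :=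
  psum (fun s => pscal (Qred (gen_binomQ (natQ n + a) (n - s) * gen_binomQ (natQ n + b) s))
                   (pmul (ppow ((-1#2)%Q :: (1#2)%Q :: nil) s)
                         (ppow ((1#2)%Q :: (1#2)%Q :: nil) (n - s)))) n.

Lemma Q2R_natQ n : Q2R (natQ n) = INR n.
Proof. unfold natQ, Q2R; simpl. rewrite INR_IZR_INZ. field. Qed.

Lemma Q2R_factQ n : Q2R (factQ n) = INR (Factorial.fact n).
Proof.
  induction n as [|n IH]; [apply RMicromega.Q2R_1|].
  simpl factQ. rewrite Q2R_mult, IH, Q2R_natQ.
  change (Factorial.fact (S n)) with (S n * Factorial.fact n)%nat. rewrite mult_INR. reflexivity.
Qed.

Lemma Q2R_neq0 q : Q2R q <> 0 -> ~ (q == 0)%Q.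
Proof. intros H Hq. apply H. rewrite (Qeq_eqR _ _ Hq). apply RMicromega.Q2R_0. Qed.

Lemma Q2R_gen_binomQ r k : Q2R (gen_binomQ r k) = gen_binom (Q2R r) k.
Proof.
  assert (Hf : forall k, Q2R (fallingQ r k) = falling (Q2R r) k).
  { induction k0 as [|k0 IH]; [apply RMicromega.Q2R_1|].
    simpl. rewrite Q2R_mult, Q2R_minus, IH, Q2R_natQ. reflexivity. }
  unfold gen_binomQ, gen_binom. rewrite Q2R_div, Hf, Q2R_factQ; [reflexivity|].
  apply Q2R_neq0. rewrite Q2R_factQ. apply not_0_INR.
  pose proof (Factorial.lt_O_fact k). lia.
Qed.

Lemma peval_jacobiQ a b n y : peval (jacobiQ a b n) y = jacobi (Q2R a) (Q2R b) n y.
Proof.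
  unfold jacobiQ, jacobi. rewrite peval_sum. apply sum_n_ext; intro s.
  rewrite peval_scal, peval_mul, !peval_pow, Q2R_Qred, Q2R_mult, !Q2R_gen_binomQ, !Q2R_plus,
    Q2R_natQ.
  replace (peval ((-1#2)%Q :: (1#2)%Q :: nil) y) with ((y - 1) / 2)
    by (simpl; rewrite !Q2R_lit; field).
  replace (peval ((1#2)%Q :: (1#2)%Q :: nil) y) with ((y + 1) / 2)
    by (simpl; rewrite !Q2R_lit; field).
  simpl. ring.
Qed.

Lemma length_jacobiQ a b n : (length (jacobiQ a b n) <= S n)%nat.
Proof.
  apply length_psum. intros s Hs. unfold pscal. rewrite length_map.
  replace (S n) with (S (s * 1 + (n - s) * 1)) by lia.
  apply length_pmul; apply length_ppow; simpl; lia.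
Qed.

(** * Integrals against the weight [sin x ^ 4] *)

Definition wint (f : R -> R) : R := RInt (fun x => f (cos x) * sin x ^ 4) 0 PI.

Lemma continuous_wint_integrand f x :
  (forall y, continuous f y) -> continuous (fun x => f (cos x) * sin x ^ 4) x.
Proof.
  intro Hf. apply (continuous_mult (fun x => f (cos x)) (fun x => sin x ^ 4)).
  - apply (continuous_comp cos f); [apply continuous_cos|apply Hf].
  - apply (ex_derive_continuous (K := R_AbsRing) (V := R_NormedModule)).
    apply ex_derive_Reals_1. reg.
Qed.

Lemma ex_RInt_wint f : (forall y, continuous f y) -> ex_RInt (fun x => f (cos x) * sin x ^ 4) 0 PI.
Proof.
  intro Hf. apply (ex_RInt_continuous (V := R_CompleteNormedModule)). intros x _.
  apply continuous_wint_integrand, Hf.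
Qed.

Lemma wint_ext f g : (forall y, f y = g y) -> wint f = wint g.
Proof. intro H. apply RInt_ext. intros x _. rewrite H. reflexivity. Qed.

Lemma wint_lincomb c1 c2 f g : (forall y, continuous f y) -> (forall y, continuous g y) ->
  wint (fun y => c1 * f y + c2 * g y) = c1 * wint f + c2 * wint g.
Proof.
  intros Hf Hg. unfold wint.
  rewrite <- !(RInt_scal (V := R_CompleteNormedModule)) by (apply ex_RInt_wint; auto).
  rewrite <- (RInt_plus (V := R_CompleteNormedModule))
    by (apply (ex_RInt_scal (V := R_CompleteNormedModule)), ex_RInt_wint; auto).
  apply RInt_ext. intros x _. unfold plus, scal; simpl; unfold mult; simpl. ring.
Qed.

Lemma continuous_peval p y : continuous (peval p) y.
Proof.
  apply (ex_derive_continuous (K := R_AbsRing) (V := R_NormedModule)), ex_derive_peval.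
Qed.

Lemma continuous_jacobi a b n y : continuous (jacobi a b n) y.
Proof.
  apply (ex_derive_continuous (K := R_AbsRing) (V := R_NormedModule)).
  eexists. apply is_derive_jacobi.
Qed.

Lemma continuous_mul_pow f k y : continuous f y -> continuous (fun y => f y * y ^ k) y.
Proof.
  intro Hf. apply (continuous_mult f (fun y => y ^ k)); [exact Hf|].
  apply (ex_derive_continuous (K := R_AbsRing) (V := R_NormedModule)).
  apply ex_derive_Reals_1. reg.
Qed.

Lemma continuous_lincomb c1 c2 (f g : R -> R) (y : R) : continuous f y -> continuous g y ->
  continuous (fun y => c1 * f y + c2 * g y) y.
Proof.
  intros Hf Hg.
  apply (continuous_plus (fun y => c1 * f y) (fun y => c2 * g y)).
  - apply (continuous_mult (K := R_AbsRing) (fun _ => c1) f); [apply continuous_const|exact Hf].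
  - apply (continuous_mult (K := R_AbsRing) (fun _ => c2) g); [apply continuous_const|exact Hg].
Qed.

Lemma sin_sq (x : R) : sin x ^ 2 = 1 - cos x ^ 2.
Proof. pose proof (sin2_cos2 x) as H. unfold Rsqr in H. simpl. lra. Qed.

(* The operator [f |-> - (sin^5 (f o cos)')' / sin^4] is symmetric for the weight [sin^4]
   on [0, PI]; it maps [P_n] to [n(n+4) P_n] and [y^k] to [k(k+4) y^k - k(k-1) y^(k-2)]. *)

Lemma is_derive_jacobi_flux n (x : R) :
  is_derive (fun x => - sin x ^ 5 * jacobi' (3/2) (3/2) n (cos x)) x
    (- (INR n * (INR n + 4)) * sin x ^ 4 * jacobi (3/2) (3/2) n (cos x)).
Proof.
  assert (HD : Derive (fun y => jacobi' (3/2) (3/2) n y) (cos x) = jacobi'' (3/2) (3/2) n (cos x))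
    by apply is_derive_unique, is_derive_jacobi'.
  auto_derive; [eexists; apply is_derive_jacobi'|].
  rewrite HD.
  transitivity (sin x ^ 4 * ((1 - cos x ^ 2) * jacobi'' (3/2) (3/2) n (cos x)
                             - 5 * cos x * jacobi' (3/2) (3/2) n (cos x))).
  { rewrite <- sin_sq. ring. }
  pose proof (jacobi_ode (3/2) (3/2) n (cos x)) as E.
  replace ((1 - cos x ^ 2) * jacobi'' (3/2) (3/2) n (cos x)
           - 5 * cos x * jacobi' (3/2) (3/2) n (cos x))
    with (- (INR n * (INR n + 4)) * jacobi (3/2) (3/2) n (cos x)) by lra.
  ring.
Qed.

Lemma is_derive_cos_pow_flux k (x : R) :
  is_derive (fun x => - INR k * sin x ^ 5 * cos x ^ pred k) x
    (sin x ^ 4 * (INR k * (INR k - 1) * cos x ^ pred (pred k) - INR k * (INR k + 4) * cos x ^ k)).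
Proof.
  destruct k as [|[|k]]; auto_derive; try easy; [cbn [pred INR]; ring|cbn [pred INR]; ring|].
  change (match k with O => 1 | S _ => INR k + 1 end) with (INR (S k)).
  simpl pred. rewrite !S_INR, <- !tech_pow_Rmult. apply Rminus_diag_uniq.
  transitivity ((INR k + 1 + 1) * (INR k + 1) * cos x ^ k * sin x ^ 4
                * (sin x ^ 2 + cos x ^ 2 - 1)); [ring|].
  rewrite sin_sq. ring.
Qed.

Lemma is_derive_comp_cos f f' (x : R) :
  is_derive f (cos x) f' -> is_derive (fun x => f (cos x)) x (- sin x * f').
Proof.
  intro H. apply (is_derive_comp f cos x f' (- sin x) H). auto_derive; [easy|ring].
Qed.

(* Green's identity: the boundary terms vanish because [sin 0 = sin PI = 0]. *)
Lemma wint_jacobi_pow_rec n k :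
  (INR k * (INR k + 4) - INR n * (INR n + 4)) * wint (fun y => jacobi (3/2) (3/2) n y * y ^ k)
  = INR k * (INR k - 1) * wint (fun y => jacobi (3/2) (3/2) n y * y ^ pred (pred k)).
Proof.
  set (J := jacobi (3/2) (3/2) n).
  set (h := fun x => - sin x ^ 5 * jacobi' (3/2) (3/2) n (cos x) * cos x ^ k
                     - - INR k * sin x ^ 5 * cos x ^ pred k * J (cos x)).
  assert (Hcont : forall j y, continuous (fun y => J y * y ^ j) y)
    by (intros; apply continuous_mul_pow, continuous_jacobi).
  apply Rminus_diag_uniq. unfold Rminus at 1. rewrite Ropp_mult_distr_l.
  rewrite <- wint_lincomb by auto. unfold wint.
  rewrite (is_RInt_unique _ 0 PI (minus (h PI) (h 0))).
  { unfold h. rewrite sin_PI, sin_0. unfold minus, plus, opp; simpl. ring. }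
  apply (is_RInt_derive (V := R_CompleteNormedModule)).
  - intros x _. eapply is_derive_eq.
    + apply (is_derive_minus
               (fun x => - sin x ^ 5 * jacobi' (3/2) (3/2) n (cos x) * cos x ^ k)
               (fun x => - INR k * sin x ^ 5 * cos x ^ pred k * J (cos x))).
      * apply (is_derive_mult (fun x => - sin x ^ 5 * jacobi' (3/2) (3/2) n (cos x))
                 (fun x => cos x ^ k)); [apply is_derive_jacobi_flux| |apply Rmult_comm].
        apply (is_derive_comp_cos (fun y => y ^ k)). auto_derive; easy.
      * apply (is_derive_mult (fun x => - INR k * sin x ^ 5 * cos x ^ pred k)
                 (fun x => J (cos x))); [apply is_derive_cos_pow_flux| |apply Rmult_comm].
        apply is_derive_comp_cos, is_derive_jacobi.
    + unfold minus, plus, opp, mult; simpl. unfold J.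
      destruct k as [|k]; simpl pred; rewrite ?S_INR; simpl pow; ring.
  - intros x _.
    apply (continuous_wint_integrand (fun y => _ * (J y * y ^ k) + _ * (J y * y ^ pred (pred k)))).
    intro y. apply continuous_lincomb; apply Hcont.
Qed.

Lemma wint_jacobi_pow_eq0 n k : (k < n)%nat -> wint (fun y => jacobi (3/2) (3/2) n y * y ^ k) = 0.
Proof.
  induction k as [k IH] using (well_founded_induction Wf_nat.lt_wf). intro Hk.
  pose proof (wint_jacobi_pow_rec n k) as E.
  assert (Hkn : INR k < INR n) by (apply lt_INR, Hk).
  pose proof (pos_INR k).
  assert (HA : INR k * (INR k + 4) - INR n * (INR n + 4) <> 0) by nra.
  assert (HR : INR k * (INR k - 1) * wint (fun y => jacobi (3/2) (3/2) n y * y ^ pred (pred k)) = 0).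
  { destruct k as [|[|k]]; simpl pred; [simpl; ring|simpl; ring|]. rewrite IH by lia. ring. }
  rewrite HR in E. apply Rmult_integral in E. destruct E; [contradiction|assumption].
Qed.

Lemma jacobi_0 a b y : jacobi a b 0 y = 1.
Proof. unfold jacobi, gen_binom. rewrite sum_O. simpl. field. Qed.

Lemma sin_pow4 (x : R) : sin x ^ 4 = 3 / 8 - cos (2 * x) / 2 + cos (4 * x) / 8.
Proof.
  replace (4 * x) with (2 * (2 * x)) by ring.
  rewrite (cos_2a_sin (2 * x)), sin_2a, !cos_2a_sin.
  transitivity (3 / 8 - (1 - 2 * sin x * sin x) / 2 + (1 - 8 * sin x ^ 2 * cos x ^ 2) / 8); [|field].
  replace (cos x ^ 2) with (1 - sin x ^ 2) by (rewrite sin_sq; ring).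
  field.
Qed.

Lemma wint_1 : wint (fun _ => 1) = 3 * PI / 8.
Proof.
  set (F := fun x => 3 * x / 8 - sin (2 * x) / 4 + sin (4 * x) / 32).
  unfold wint. rewrite (is_RInt_unique _ 0 PI (minus (F PI) (F 0))).
  { unfold minus, plus, opp, F; simpl.
    replace (2 * PI) with (0 + 2 * PI) by ring.
    replace (4 * PI) with (0 + 2 * PI + 2 * PI) by ring.
    rewrite !Rmult_0_r, !sin_plus, !sin_0, cos_0, sin_2PI, cos_2PI. field. }
  apply (is_RInt_derive (V := R_CompleteNormedModule)).
  - intros x _. unfold F. auto_derive; [easy|]. rewrite Rmult_1_l, sin_pow4. field.
  - intros x _. apply (continuous_wint_integrand (fun _ => 1)). intro. apply continuous_const.
Qed.

Fixpoint momentQ (k : nat) : Q :=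
  match k with
  | O => 3 # 8
  | S O => 0
  | S (S k' as k1) => momentQ k' * natQ k1 / natQ (k' + 6)
  end.

Lemma wint_pow_rec k :
  INR k * (INR k + 4) * wint (fun y => y ^ k) = INR k * (INR k - 1) * wint (fun y => y ^ pred (pred k)).
Proof.
  pose proof (wint_jacobi_pow_rec 0 k) as E.
  rewrite !(wint_ext (fun y => jacobi _ _ 0 y * y ^ _) (fun y => y ^ _)) in E
    by (intro; rewrite jacobi_0; ring).
  rewrite <- E. simpl INR. ring.
Qed.

Lemma wint_pow k : wint (fun y => y ^ k) = PI * Q2R (momentQ k).
Proof.
  cut (wint (fun y => y ^ k) = PI * Q2R (momentQ k)
       /\ wint (fun y => y ^ S k) = PI * Q2R (momentQ (S k))); [tauto|].
  induction k as [|k [IH1 IH2]]; (split; [try exact IH2|]).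
  - rewrite (wint_ext _ (fun _ => 1)), wint_1 by reflexivity. simpl. rewrite Q2R_lit. field.
  - pose proof (wint_pow_rec 1) as E. change (INR 1) with 1 in E.
    simpl momentQ. rewrite RMicromega.Q2R_0. lra.
  - pose proof (wint_pow_rec (S (S k))) as E. simpl pred in E. rewrite IH1 in E.
    assert (Hk : 0 <= INR k) by apply pos_INR.
    simpl momentQ. rewrite Q2R_div, Q2R_mult, !Q2R_natQ.
    2:{ apply Q2R_neq0. rewrite Q2R_natQ, plus_INR. simpl. lra. }
    rewrite plus_INR, !S_INR in *. simpl INR.
    apply (Rmult_eq_reg_l ((INR k + 1 + 1) * (INR k + 1 + 1 + 4))); [|nra].
    rewrite E. field. lra.
Qed.

Fixpoint pmoment (m : nat -> R) (k : nat) (p : list Q) : R :=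
  match p with nil => 0 | c :: p' => Q2R c * m k + pmoment m (S k) p' end.

Lemma wint_mul_pow_peval f k p : (forall y, continuous f y) ->
  wint (fun y => f y * y ^ k * peval p y) = pmoment (fun i => wint (fun y => f y * y ^ i)) k p.
Proof.
  intro Hf. revert k; induction p as [|c p IH]; intro k; simpl.
  - rewrite (wint_ext _ (fun y => 0 * f y + 0 * f y)) by (intro; ring).
    rewrite wint_lincomb by exact Hf. ring.
  - rewrite <- IH.
    rewrite (wint_ext _ (fun y => Q2R c * (f y * y ^ k) + 1 * (f y * y ^ S k * peval p y)))
      by (intro; simpl; ring).
    rewrite wint_lincomb; [ring| |]; intro y.
    + apply continuous_mul_pow, Hf.
    + apply (continuous_mult (fun y => f y * y ^ S k) (peval p));
        [apply continuous_mul_pow, Hf|apply continuous_peval].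
Qed.

Lemma pmoment_eq0 m k p : (forall i, (k <= i < k + length p)%nat -> m i = 0) -> pmoment m k p = 0.
Proof.
  revert k; induction p as [|c p IH]; intros k Hm; simpl in *; [reflexivity|].
  rewrite IH by (intros; apply Hm; lia). rewrite Hm by lia. ring.
Qed.

Lemma wint_jacobi_peval n p : (length p <= n)%nat ->
  wint (fun y => jacobi (3/2) (3/2) n y * peval p y) = 0.
Proof.
  intro Hp.
  rewrite (wint_ext _ (fun y => jacobi (3/2) (3/2) n y * y ^ 0 * peval p y)) by (intro; ring).
  rewrite wint_mul_pow_peval by apply continuous_jacobi.
  apply pmoment_eq0. intros i Hi. apply wint_jacobi_pow_eq0. lia.
Qed.

Fixpoint pmomentQ (k : nat) (p : list Q) : Q :=
  match p with nil => 0%Q | c :: p' => (c * momentQ k + pmomentQ (S k) p')%Q end.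

Lemma wint_peval p : wint (peval p) = PI * Q2R (pmomentQ 0 p).
Proof.
  rewrite (wint_ext _ (fun y => 1 * y ^ 0 * peval p y)) by (intro; ring).
  rewrite wint_mul_pow_peval by (intro; apply continuous_const).
  generalize 0%nat. induction p as [|c p IH]; intro k; simpl.
  - rewrite RMicromega.Q2R_0. ring.
  - rewrite IH, Q2R_plus, Q2R_mult, (wint_ext _ (fun y => y ^ k)), wint_pow by (intro; ring).
    ring.
Qed.

(** * The Gamma function at integers and half-integers *)

Lemma filterlim_pinfty_of_bound (f : R -> R) l C :
  (forall t, 1 <= t -> Rabs (f t - l) <= C / t) -> filterlim f (Rbar_locally p_infty) (locally l).
Proof.
  intro H. apply filterlim_locally. intro eps. pose proof (cond_pos eps) as He.
  exists (Rmax 1 (Rabs C / eps + 1)). intros t Ht.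
  assert (H1 : 1 < t) by (eapply Rle_lt_trans; [apply Rmax_l|exact Ht]).
  assert (H2 : Rabs C / eps + 1 < t) by (eapply Rle_lt_trans; [apply Rmax_r|exact Ht]).
  change (Rabs (f t - l) < eps).
  eapply Rle_lt_trans; [apply H; lra|].
  apply (Rle_lt_trans _ (Rabs C / t)).
  - unfold Rdiv. apply Rmult_le_compat_r; [left; apply Rinv_0_lt_compat; lra|apply RRle_abs].
  - apply (Rmult_lt_reg_r t); [lra|]. unfold Rdiv. rewrite Rmult_assoc, Rinv_l by lra.
    assert (Rabs C / eps * eps = Rabs C) by (field; lra).
    pose proof (Rabs_pos C). nra.
Qed.

Lemma filterlim_right0_of_bound (f : R -> R) l C : 0 <= C ->
  (forall t, 0 < t <= 1 -> Rabs (f t - l) <= C * t) -> filterlim f (at_right 0) (locally l).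
Proof.
  intros HC H. apply filterlim_locally. intro eps. pose proof (cond_pos eps) as He.
  assert (Hd : 0 < Rmin 1 (eps / (C + 1))) by (apply Rmin_pos; [lra|apply Rdiv_lt_0_compat; lra]).
  exists (mkposreal _ Hd). intros t Ht Hpos. change (Rabs (f t - l) < eps).
  change (Rabs (t - 0) < Rmin 1 (eps / (C + 1))) in Ht.
  rewrite Rminus_0_r, Rabs_right in Ht by lra.
  assert (Ht1 : t < 1) by (eapply Rlt_le_trans; [exact Ht|apply Rmin_l]).
  assert (Ht2 : t < eps / (C + 1)) by (eapply Rlt_le_trans; [exact Ht|apply Rmin_r]).
  eapply Rle_lt_trans; [apply H; lra|].
  apply (Rle_lt_trans _ ((C + 1) * t)); [nra|].
  apply (Rmult_lt_reg_l (/ (C + 1))); [apply Rinv_0_lt_compat; lra|].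
  rewrite <- Rmult_assoc, Rinv_l by lra. unfold Rdiv in Ht2. lra.
Qed.

Lemma exp_le x y : x <= y -> exp x <= exp y.
Proof. intros [H|<-]; [left; apply exp_increasing, H|right; reflexivity]. Qed.

Lemma Rpower_pos t y : 0 < Rpower t y.
Proof. apply exp_pos. Qed.

Lemma Rpower_le_1 t y : 0 < t <= 1 -> 0 <= y -> Rpower t y <= 1.
Proof.
  intros Ht Hy. unfold Rpower. rewrite <- exp_0. apply exp_le.
  assert (ln t <= 0).
  { destruct (proj2 Ht) as [Hlt|Heq]; [|rewrite Heq, ln_1; lra].
    rewrite <- ln_1. left. apply ln_increasing; lra. }
  nra.
Qed.

Lemma pow_div_le_exp (k : nat) t : (0 < k)%nat -> 0 <= t -> (t / INR k) ^ k <= exp t.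
Proof.
  intros Hk Ht. assert (HK : 0 < INR k) by (apply lt_0_INR, Hk).
  replace (exp t) with (exp (t / INR k) ^ k).
  - apply pow_incr. split; [apply Rdiv_le_0_compat; lra|].
    pose proof (exp_ineq1_le (t / INR k)). lra.
  - rewrite <- Rpower_pow by apply exp_pos. unfold Rpower. rewrite ln_exp. f_equal. field. lra.
Qed.

Lemma filter_prod_pos :
  filter_prod (at_right 0) (Rbar_locally p_infty) (fun ab => 0 < fst ab /\ 0 < snd ab).
Proof.
  apply (Filter_prod _ _ _ (fun a => 0 < a) (fun b => 0 < b)).
  - exists (mkposreal 1 Rlt_0_1). intros y _ Hy. exact Hy.
  - exists 0. intros y Hy. exact Hy.
  - intros a b Ha Hb. split; assumption.
Qed.

Lemma locally_pos t : 0 < t -> locally t (fun y => 0 < y).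
Proof.
  intro Ht. exists (mkposreal t Ht). intros y Hy.
  change (Rabs (y - t) < t) in Hy. apply Rabs_lt_between in Hy. lra.
Qed.

Lemma is_RInt_gen_derive_pos (G g : R -> R) la lb :
  (forall t, 0 < t -> is_derive G t (g t)) -> (forall t, 0 < t -> continuous g t) ->
  filterlim G (at_right 0) (locally la) -> filterlim G (Rbar_locally p_infty) (locally lb) ->
  is_RInt_gen g (at_right 0) (Rbar_locally p_infty) (lb - la).
Proof.
  intros HG Hg Ha Hb.
  assert (Hpos : filter_prod (at_right 0) (Rbar_locally p_infty)
                   (fun ab => forall t, Rmin (fst ab) (snd ab) <= t <= Rmax (fst ab) (snd ab) -> 0 < t)).
  { apply (filter_imp _ _ (fun ab H t Ht => Rlt_le_trans _ _ _ (Rmin_glb_lt _ _ _ (proj1 H) (proj2 H))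
                                              (proj1 Ht))), filter_prod_pos. }
  apply (is_RInt_gen_ext (Derive G)).
  - eapply filter_imp; [|exact Hpos]. intros ab H t Ht.
    apply is_derive_unique, HG, H. lra.
  - apply is_RInt_gen_Derive; [| |exact Ha|exact Hb]; eapply filter_imp; try exact Hpos;
      intros ab H t Ht; specialize (H t Ht).
    + eexists. apply HG, H.
    + apply (continuous_ext_loc _ g); [|apply Hg, H].
      apply (filter_imp (fun y => 0 < y)); [|apply locally_pos, H].
      intros y Hy. symmetry. apply is_derive_unique, HG, Hy.
Qed.

Definition gamma_integrand (x t : R) : R := Rpower t (x - 1) * exp (- t).

Lemma Gamma_unique x l :
  is_RInt_gen (gamma_integrand x) (at_right 0) (Rbar_locally p_infty) l -> Gamma x = l.
Proof. apply (is_RInt_gen_unique (V := R_CompleteNormedModule)). Qed.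

Lemma is_derive_Rpower t y : 0 < t -> is_derive (fun u => Rpower u y) t (y * Rpower t (y - 1)).
Proof. intro Ht. apply is_derive_Reals, derivable_pt_lim_power, Ht. Qed.

Lemma continuous_gamma_integrand x t : 0 < t -> continuous (gamma_integrand x) t.
Proof.
  intro Ht. apply (ex_derive_continuous (K := R_AbsRing) (V := R_NormedModule)).
  apply (ex_derive_mult (fun t => Rpower t (x - 1)) (fun t => exp (- t))).
  - eexists. apply is_derive_Rpower, Ht.
  - apply ex_derive_Reals_1. reg.
Qed.

Lemma Rpower_exp_pos t x : 0 < Rpower t x * exp (- t).
Proof. apply Rmult_lt_0_compat; [apply Rpower_pos|apply exp_pos]. Qed.

Lemma Rpower_exp_right0 x : 1 <= x ->
  filterlim (fun t => Rpower t x * exp (- t)) (at_right 0) (locally 0).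
Proof.
  intro Hx. apply (filterlim_right0_of_bound _ _ 1); [lra|]. intros t Ht.
  rewrite Rminus_0_r, Rabs_right by (left; apply Rpower_exp_pos).
  replace (Rpower t x) with (t * Rpower t (x - 1))
    by (rewrite <- (Rpower_1 t) at 1 by lra; rewrite <- Rpower_plus; f_equal; ring).
  pose proof (Rpower_le_1 t (x - 1) Ht ltac:(lra)). pose proof (Rpower_pos t (x - 1)).
  assert (exp (- t) <= 1) by (rewrite <- exp_0; apply exp_le; lra). pose proof (exp_pos (- t)).
  assert (Rpower t (x - 1) * exp (- t) <= 1) by nra. nra.
Qed.

Lemma exists_nat_ge (x : R) : exists m : nat, x <= INR m.
Proof.
  destruct (archimed x) as [Hx _]. exists (Z.to_nat (up x)).
  destruct (Z_lt_le_dec (up x) 0) as [Hneg|Hnn].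
  - apply IZR_lt in Hneg. pose proof (pos_INR (Z.to_nat (up x))). lra.
  - rewrite INR_IZR_INZ, Z2Nat.id by exact Hnn. lra.
Qed.

Lemma Rpower_exp_pinfty x :
  filterlim (fun t => Rpower t x * exp (- t)) (Rbar_locally p_infty) (locally 0).
Proof.
  destruct (exists_nat_ge x) as [m Hm].
  apply (filterlim_pinfty_of_bound _ _ (INR (S m) ^ S m)). intros t Ht.
  rewrite Rminus_0_r, Rabs_right by (left; apply Rpower_exp_pos).
  assert (E1 : Rpower t x <= t ^ m) by (rewrite <- Rpower_pow by lra; apply Rle_Rpower; lra).
  pose proof (pow_div_le_exp (S m) t ltac:(lia) ltac:(lra)) as E2.
  assert (HK : 0 < INR (S m)) by (apply lt_0_INR; lia).
  assert (Hp : 0 < (t / INR (S m)) ^ S m) by (apply pow_lt, Rdiv_lt_0_compat; lra).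
  assert (Hp2 : 0 < t ^ m) by (apply pow_lt; lra).
  rewrite exp_Ropp.
  apply (Rle_trans _ (t ^ m / (t / INR (S m)) ^ S m)).
  - unfold Rdiv. apply Rmult_le_compat; [left; apply Rpower_pos|left; apply Rinv_0_lt_compat, exp_pos
                                         |exact E1|apply Rinv_le_contravar; lra].
  - right. unfold Rdiv. rewrite Rpow_mult_distr, pow_inv.
    replace (t ^ S m) with (t * t ^ m) by (simpl; ring).
    assert (INR (S m) ^ S m <> 0) by (apply pow_nonzero; lra).
    field. repeat split; lra.
Qed.

Lemma is_RInt_gen_gamma_succ x l : 1 <= x ->
  is_RInt_gen (gamma_integrand x) (at_right 0) (Rbar_locally p_infty) l ->
  is_RInt_gen (gamma_integrand (x + 1)) (at_right 0) (Rbar_locally p_infty) (x * l).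
Proof.
  intros Hx Hl.
  assert (HD : is_RInt_gen (fun t => x * gamma_integrand x t - gamma_integrand (x + 1) t)
                 (at_right 0) (Rbar_locally p_infty) (0 - 0)).
  { apply (is_RInt_gen_derive_pos (fun t => Rpower t x * exp (- t))).
    - intros t Ht. eapply is_derive_eq.
      + apply (is_derive_mult (fun t => Rpower t x) (fun t => exp (- t)));
          [apply is_derive_Rpower, Ht| |].
        * auto_derive; [easy|reflexivity].
        * intros; apply Rmult_comm.
      + unfold gamma_integrand, plus, mult; simpl. replace (x + 1 - 1) with x by ring. ring.
    - intros t Ht. apply (continuous_minus (fun t => x * gamma_integrand x t) (gamma_integrand (x + 1))).
      + apply (continuous_mult (K := R_AbsRing) (fun _ => x)); [apply continuous_const|].
        apply continuous_gamma_integrand, Ht.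
      + apply continuous_gamma_integrand, Ht.
    - apply Rpower_exp_right0, Hx.
    - apply Rpower_exp_pinfty. }
  pose proof (is_RInt_gen_minus _ _ _ _ (is_RInt_gen_scal _ x _ Hl) HD) as H.
  replace (x * l) with (minus (scal x l) (0 - 0))
    by (unfold minus, plus, opp, scal; simpl; unfold mult; simpl; ring).
  eapply is_RInt_gen_ext; [|exact H].
  apply filter_forall. intros ab t _. unfold minus, plus, opp, scal; simpl; unfold mult; simpl. ring.
Qed.

Lemma is_RInt_gen_gamma_1 : is_RInt_gen (gamma_integrand 1) (at_right 0) (Rbar_locally p_infty) 1.
Proof.
  replace 1 with (0 - -1) at 2 by ring.
  apply (is_RInt_gen_derive_pos (fun t => - exp (- t))).
  - intros t Ht. unfold gamma_integrand. replace (1 - 1) with 0 by ring. rewrite Rpower_O by exact Ht.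
    auto_derive; [easy|ring].
  - intros t Ht. apply continuous_gamma_integrand, Ht.
  - apply (filterlim_right0_of_bound _ _ 1); [lra|]. intros t Ht.
    pose proof (exp_ineq1_le (- t)).
    assert (exp (- t) <= 1) by (rewrite <- exp_0; apply exp_le; lra).
    rewrite Rabs_right by lra. lra.
  - apply (filterlim_pinfty_of_bound _ _ 1). intros t Ht.
    rewrite Rminus_0_r, Rabs_Ropp, Rabs_right by (left; apply exp_pos).
    rewrite exp_Ropp. pose proof (exp_ineq1_le t). pose proof (exp_pos t).
    unfold Rdiv. rewrite Rmult_1_l. apply Rinv_le_contravar; lra.
Qed.

Lemma Gamma_nat n : Gamma (1 + INR n) = INR (Factorial.fact n).
Proof.
  apply Gamma_unique. induction n as [|n IH].
  - rewrite Rplus_0_r. exact is_RInt_gen_gamma_1.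
  - rewrite S_INR, <- Rplus_assoc.
    change (Factorial.fact (S n)) with (S n * Factorial.fact n)%nat.
    rewrite mult_INR, S_INR, <- (Rplus_comm 1 (INR n)).
    apply is_RInt_gen_gamma_succ, IH. pose proof (pos_INR n). lra.
Qed.

Lemma ex_RInt_pos (f : R -> R) a b :
  (forall t, 0 < t -> continuous f t) -> 0 < a -> 0 < b -> ex_RInt f a b.
Proof.
  intros Hc Ha Hb. apply (ex_RInt_continuous (V := R_CompleteNormedModule)). intros z Hz.
  apply Hc. eapply Rlt_le_trans; [apply (Rmin_glb_lt _ _ _ Ha Hb)|exact (proj1 Hz)].
Qed.

Lemma RInt_nonneg_subinterval (f : R -> R) a b a' b' :
  (forall t, 0 < t -> continuous f t) -> (forall t, 0 < t -> 0 <= f t) ->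
  0 < a <= a' -> a' <= b' <= b -> RInt f a' b' <= RInt f a b.
Proof.
  intros Hc Hp Ha Hb.
  assert (Hex : forall u v, a <= u -> a <= v -> ex_RInt f u v) by (intros; apply ex_RInt_pos; auto; lra).
  rewrite <- (RInt_Chasles (V := R_CompleteNormedModule) f a a' b) by (apply Hex; lra).
  rewrite <- (RInt_Chasles (V := R_CompleteNormedModule) f a' b' b) by (apply Hex; lra).
  assert (0 <= RInt f a a') by (apply RInt_ge_0; [lra|apply Hex; lra|intros; apply Hp; lra]).
  assert (0 <= RInt f b' b) by (apply RInt_ge_0; [lra|apply Hex; lra|intros; apply Hp; lra]).
  unfold plus; simpl. lra.
Qed.

(* The limit is the supremum of the integrals over [[a, b]]. *)
Lemma is_RInt_gen_nonneg_bounded (f : R -> R) a0 b0 M : 0 < a0 <= b0 ->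
  (forall t, 0 < t -> continuous f t) -> (forall t, 0 < t -> 0 <= f t) ->
  (forall a b, 0 < a <= a0 -> b0 <= b -> RInt f a b <= M) ->
  exists l, is_RInt_gen f (at_right 0) (Rbar_locally p_infty) l /\ RInt f a0 b0 <= l <= M.
Proof.
  intros Hab Hc Hp HM.
  set (E := fun r => exists a b, (0 < a <= a0 /\ b0 <= b) /\ r = RInt f a b).
  assert (HE1 : bound E) by (exists M; intros r [a [b [Hr ->]]]; apply HM; tauto).
  assert (HE2 : exists r, E r) by (exists (RInt f a0 b0), a0, b0; split; [lra|reflexivity]).
  destruct (completeness E HE1 HE2) as [l [Hub Hlub]].
  exists l. split; [|split].
  - intros P [eps HP].
    assert (Hex : exists a1 b1, (0 < a1 <= a0 /\ b0 <= b1) /\ l - eps < RInt f a1 b1).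
    { apply Classical_Prop.NNPP. intro Hn.
      assert (Hb : is_upper_bound E (l - eps)).
      { intros r [a [b [Hr ->]]]. apply Rnot_lt_le. intro Hlt. apply Hn. exists a, b. tauto. }
      pose proof (Hlub _ Hb). pose proof (cond_pos eps). lra. }
    destruct Hex as [a1 [b1 [[Ha1 Hb1] Hr]]].
    apply (Filter_prod _ _ _ (fun a => 0 < a < a1) (fun b => b1 < b)).
    + exists (mkposreal a1 (proj1 Ha1)). intros y Hy Hy0.
      change (Rabs (y - 0) < a1) in Hy. apply Rabs_lt_between in Hy. lra.
    + exists b1. intros y Hy. exact Hy.
    + intros a b Ha Hb. exists (RInt f a b). split.
      * apply (RInt_correct (V := R_CompleteNormedModule)), ex_RInt_pos; auto; lra.
      * apply HP. change (Rabs (RInt f a b - l) < eps).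
        assert (RInt f a b <= l) by (apply Hub; exists a, b; split; [lra|reflexivity]).
        assert (RInt f a1 b1 <= RInt f a b) by (apply RInt_nonneg_subinterval; auto; lra).
        rewrite Rabs_left1 by lra. lra.
  - apply Hub. exists a0, b0. split; [lra|reflexivity].
  - apply Hlub. intros r [a [b [Hr ->]]]. apply HM; tauto.
Qed.

(* [(t + t^2) / 2] dominates [t^(3/2)] by AM-GM, [-(t^2 + 3t + 3) e^(-t) / 2] is a primitive
   of [(t + t^2) e^(-t) / 2], and [(a^2 + 3a + 3) / 2 <= 83/50] for [a <= 1/10]. *)
Lemma RInt_gamma_52_le a b :
  0 < a <= 1 / 10 -> 1 <= b -> RInt (gamma_integrand (5 / 2)) a b <= 83 / 50.
Proof.
  intros Ha Hb.
  set (F := fun t => - (t ^ 2 + 3 * t + 3) / 2 * exp (- t)).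
  assert (HI : is_RInt (fun t => (t + t ^ 2) / 2 * exp (- t)) a b (minus (F b) (F a))).
  { apply (is_RInt_derive (V := R_CompleteNormedModule) F).
    - intros x _. unfold F. auto_derive; [easy|]. field.
    - intros x _. apply (ex_derive_continuous (K := R_AbsRing) (V := R_NormedModule)).
      apply ex_derive_Reals_1. reg. }
  apply (Rle_trans _ (minus (F b) (F a))).
  - rewrite <- (is_RInt_unique _ _ _ _ HI). apply RInt_le; [lra| | |].
    + apply ex_RInt_pos; [apply continuous_gamma_integrand|lra|lra].
    + eexists; exact HI.
    + intros t Ht. unfold gamma_integrand.
      replace (5 / 2 - 1) with (1 + / 2) by field.
      rewrite Rpower_plus, Rpower_1, Rpower_sqrt by lra.
      apply Rmult_le_compat_r; [left; apply exp_pos|].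
      pose proof (sqrt_sqrt t ltac:(lra)). pose proof (sqrt_pos t).
      assert (0 <= t * (sqrt t - 1) ^ 2) by (apply Rmult_le_pos; [lra|apply pow2_ge_0]).
      nra.
  - unfold minus, plus, opp, F; simpl.
    pose proof (exp_pos (- b)).
    assert (exp (- a) <= 1) by (rewrite <- exp_0; apply exp_le; lra).
    assert (0 <= (b ^ 2 + 3 * b + 3) / 2 * exp (- b)) by (apply Rmult_le_pos; [nra|lra]).
    assert (0 <= a ^ 2 + 3 * a + 3) by nra.
    assert ((a ^ 2 + 3 * a + 3) / 2 * exp (- a) <= (a ^ 2 + 3 * a + 3) / 2) by nra.
    nra.
Qed.

Lemma is_RInt_gen_Gamma_52 :
  is_RInt_gen (gamma_integrand (5 / 2)) (at_right 0) (Rbar_locally p_infty) (Gamma (5 / 2))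
  /\ 0 < Gamma (5 / 2) <= 83 / 50.
Proof.
  destruct (is_RInt_gen_nonneg_bounded (gamma_integrand (5 / 2)) (1 / 10) 1 (83 / 50))
    as [l [Hl [Hlo Hhi]]].
  - lra.
  - apply continuous_gamma_integrand.
  - intros t _. left. apply Rpower_exp_pos.
  - apply RInt_gamma_52_le.
  - rewrite (Gamma_unique _ _ Hl). split; [exact Hl|split; [|exact Hhi]].
    eapply Rlt_le_trans; [|exact Hlo].
    apply RInt_gt_0; [lra| |].
    + intros x Hx. apply Rpower_exp_pos.
    + intros x Hx. apply continuous_gamma_integrand. lra.
Qed.

Fixpoint pochQ (n : nat) : Q :=
  match n with O => 1%Q | S n' => ((5 # 2) + natQ n') * pochQ n' end%Q.

Lemma Gamma_half n : Gamma (5 / 2 + INR n) = Gamma (5 / 2) * Q2R (pochQ n).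
Proof.
  apply Gamma_unique. induction n as [|n IH].
  - rewrite Rplus_0_r. simpl. rewrite RMicromega.Q2R_1, Rmult_1_r. apply is_RInt_gen_Gamma_52.
  - rewrite S_INR, <- Rplus_assoc. simpl pochQ. rewrite Q2R_mult, Q2R_plus, Q2R_natQ.
    rewrite Q2R_lit.
    replace (Gamma (5 / 2) * ((5 / 2 + INR n) * Q2R (pochQ n)))
      with ((5 / 2 + INR n) * (Gamma (5 / 2) * Q2R (pochQ n))) by ring.
    apply is_RInt_gen_gamma_succ, IH. pose proof (pos_INR n). lra.
Qed.

Lemma pochQ_pos n : 0 < Q2R (pochQ n).
Proof.
  induction n as [|n IH]; simpl pochQ; [rewrite RMicromega.Q2R_1; lra|].
  rewrite Q2R_mult, Q2R_plus, Q2R_natQ, Q2R_lit.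
  pose proof (pos_INR n). nra.
Qed.

Definition normQ (n : nat) : Q :=
  ((natQ n + 2) * factQ n * factQ (n + 3) / (8 * (pochQ n * pochQ n)))%Q.

Lemma Q2R_normQ n : Q2R (normQ n)
  = (INR n + 2) * INR (Factorial.fact n) * INR (Factorial.fact (n + 3)) / (8 * Q2R (pochQ n) ^ 2).
Proof.
  pose proof (pochQ_pos n). unfold normQ.
  rewrite Q2R_div.
  - rewrite !Q2R_mult, Q2R_plus, !Q2R_factQ, Q2R_natQ, !Q2R_lit. field. lra.
  - apply Q2R_neq0. rewrite !Q2R_mult, Q2R_lit. nra.
Qed.

Lemma Nfrak_sq n : Nfrak n ^ 2 = Q2R (normQ n) / Gamma (5 / 2) ^ 2.
Proof.
  pose proof (pochQ_pos n). pose proof (proj2 is_RInt_gen_Gamma_52).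
  assert (0 < INR (Factorial.fact n)) by (apply lt_0_INR, Factorial.lt_O_fact).
  assert (0 < INR (Factorial.fact (n + 3))) by (apply lt_0_INR, Factorial.lt_O_fact).
  pose proof (pos_INR n).
  unfold Nfrak, omega. rewrite Q2R_normQ.
  replace (4 + INR n) with (1 + INR (n + 3)) by (rewrite plus_INR; simpl; ring).
  rewrite !Gamma_nat, Gamma_half.
  unfold Rdiv. rewrite Rpow_mult_distr, pow_inv, <- Rsqr_pow2, Rsqr_sqrt.
  2:{ apply Rmult_le_pos; [apply Rmult_le_pos|]; lra. }
  replace ((2 * sqrt 2 * (Gamma (5 * / 2) * Q2R (pochQ n))) ^ 2)
    with (4 * (sqrt 2 * sqrt 2) * Gamma (5 * / 2) ^ 2 * Q2R (pochQ n) ^ 2) by ring.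
  rewrite sqrt_sqrt by lra. field. lra.
Qed.

Lemma Nfrak_pos n : 0 < Nfrak n.
Proof.
  pose proof (pochQ_pos n). pose proof (proj2 is_RInt_gen_Gamma_52).
  assert (0 < INR (Factorial.fact n)) by (apply lt_0_INR, Factorial.lt_O_fact).
  assert (0 < INR (Factorial.fact (n + 3))) by (apply lt_0_INR, Factorial.lt_O_fact).
  pose proof (pos_INR n). assert (0 < sqrt 2) by (apply sqrt_lt_R0; lra).
  unfold Nfrak, omega.
  replace (4 + INR n) with (1 + INR (n + 3)) by (rewrite plus_INR; simpl; ring).
  rewrite !Gamma_nat, Gamma_half.
  apply Rdiv_lt_0_compat; [apply sqrt_lt_R0|];
    apply Rmult_lt_0_compat; try apply Rmult_lt_0_compat; lra.
Qed.

(** * The coefficients [Cbar] and [C4] *)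

Notation jacQ := (jacobiQ (3 # 2) (3 # 2)).

Lemma efrak_peval n (x : R) : efrak n x = Nfrak n * peval (jacQ n) (cos x).
Proof. rewrite peval_jacobiQ. reflexivity. Qed.

(* Turns the weight [sin^6] of [C4] into [sin^4]. *)
Definition sin2Q : list Q := (1 :: 0 :: -1 :: nil)%Q.

Lemma peval_sin2Q (x : R) : peval sin2Q (cos x) = sin x ^ 2.
Proof. rewrite sin_sq. simpl. rewrite !Q2R_lit. field. Qed.

Definition cbar_poly (i j : nat) : list Q := pmul (jacQ i) (jacQ j).
Definition c4_poly (i j k : nat) : list Q := pmul (pmul (pmul (jacQ i) (jacQ j)) (jacQ k)) sin2Q.

Lemma RInt_scal_wint c f : (forall y, continuous f y) ->
  RInt (fun x => c * (f (cos x) * sin x ^ 4)) 0 PI = c * wint f.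
Proof. intro Hf. apply (RInt_scal (V := R_CompleteNormedModule)), ex_RInt_wint, Hf. Qed.

Lemma continuous_peval_mul p q y : continuous (fun y => peval p y * peval q y) y.
Proof. apply (continuous_mult (peval p) (peval q)); apply continuous_peval. Qed.

Lemma Cbar_wint i j m : Cbar i j m
  = Nfrak i * Nfrak j * Nfrak m * wint (fun y => peval (cbar_poly i j) y * peval (jacQ m) y).
Proof.
  unfold Cbar. rewrite <- RInt_scal_wint by apply continuous_peval_mul.
  apply RInt_ext. intros x _. simpl. unfold cbar_poly. rewrite !efrak_peval, peval_mul. ring.
Qed.

Lemma C4_wint i j k m : C4 i j k m
  = Nfrak i * Nfrak j * Nfrak k * Nfrak m * wint (fun y => peval (c4_poly i j k) y * peval (jacQ m) y).
Proof.
  unfold C4. rewrite <- RInt_scal_wint by apply continuous_peval_mul.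
  apply RInt_ext. intros x _. simpl. unfold c4_poly.
  rewrite !efrak_peval, !peval_mul, peval_sin2Q. ring.
Qed.

Lemma wint_peval_jacobi p n : (length p <= n)%nat -> wint (fun y => peval p y * peval (jacQ n) y) = 0.
Proof.
  intro Hp. rewrite <- (wint_jacobi_peval n p Hp). apply wint_ext. intro y.
  rewrite peval_jacobiQ. apply Rmult_comm.
Qed.

Lemma Cbar_eq0 i j m : (i + j < m)%nat -> Cbar i j m = 0.
Proof.
  intro H. rewrite Cbar_wint, wint_peval_jacobi; [ring|].
  pose proof (length_jacobiQ (3 # 2) (3 # 2)) as Hlen.
  pose proof (length_pmul _ _ _ _ (Hlen i) (Hlen j)). unfold cbar_poly. lia.
Qed.

Lemma C4_eq0 i j k m : (i + j + k + 2 < m)%nat -> C4 i j k m = 0.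
Proof.
  intro H. rewrite C4_wint, wint_peval_jacobi; [ring|]. unfold c4_poly.
  pose proof (length_jacobiQ (3 # 2) (3 # 2)) as Hlen.
  pose proof (length_pmul _ sin2Q _ 2
                (length_pmul _ _ _ _ (length_pmul _ _ _ _ (Hlen i) (Hlen j)) (Hlen k)) (le_n 3)).
  lia.
Qed.

Lemma wint_peval_mul p q : wint (fun y => peval p y * peval q y) = PI * Q2R (pmomentQ 0 (pmul p q)).
Proof. rewrite <- wint_peval. apply wint_ext. intro y. symmetry. apply peval_mul. Qed.

Definition cbarQ (i j m : nat) : Q := pmomentQ 0 (pmul (cbar_poly i j) (jacQ m)).
Definition c4Q (g : nat) : Q := pmomentQ 0 (pmul (c4_poly g g g) (jacQ g)).

Lemma Cbar_Q i j m : Cbar i j m = Nfrak i * Nfrak j * Nfrak m * (PI * Q2R (cbarQ i j m)).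
Proof. rewrite Cbar_wint, wint_peval_mul. reflexivity. Qed.

Lemma C4_Q g : C4 g g g g = Nfrak g ^ 4 * (PI * Q2R (c4Q g)).
Proof. rewrite C4_wint, wint_peval_mul. unfold c4Q. ring. Qed.

Definition resQ (g nu : nat) : Q :=
  (2 / ((natQ nu + 2) * (natQ nu + 2))
   + 1 / ((natQ nu + 2) * (natQ nu + 2) - (2 * (natQ g + 2)) * (2 * (natQ g + 2))))%Q.

Lemma Q2R_resQ g nu : (nu <= 2 * g)%nat ->
  Q2R (resQ g nu) = 2 / omega nu ^ 2 + 1 / (omega nu ^ 2 - (2 * omega g) ^ 2).
Proof.
  intro H. apply le_INR in H. rewrite mult_INR in H. simpl INR in H.
  pose proof (pos_INR nu). pose proof (pos_INR g).
  unfold resQ, omega. rewrite Q2R_plus, !Q2R_div.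
  - rewrite !Q2R_mult, !Q2R_minus, !Q2R_mult, !Q2R_plus, !Q2R_natQ, !Q2R_lit. field. split; nra.
  - apply Q2R_neq0. rewrite !Q2R_minus, !Q2R_mult, !Q2R_plus, !Q2R_natQ, !Q2R_lit. nra.
  - apply Q2R_neq0. rewrite !Q2R_mult, !Q2R_plus, !Q2R_natQ, !Q2R_lit. nra.
Qed.

Fixpoint Qsum (F : nat -> Q) (n : nat) : Q :=
  match n with O => F O | S n' => Qred (Qsum F n' + F n) end.

Lemma Q2R_Qsum F n : Q2R (Qsum F n) = sum_n (fun i => Q2R (F i)) n.
Proof.
  induction n as [|n IH]; simpl; [rewrite sum_O; reflexivity|].
  rewrite Q2R_Qred, Q2R_plus, IH, sum_Sn. reflexivity.
Qed.

Definition qQ (g : nat) : Q :=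
  Qsum (fun nu => Qred (normQ nu * (cbarQ g g nu * cbarQ g g nu) * resQ g nu)) (2 * g).

Lemma qfrak_Q g : qfrak g = 9 / 4 * (Nfrak g ^ 4 * PI ^ 2 / Gamma (5 / 2) ^ 2) * Q2R (qQ g).
Proof.
  unfold qfrak, qQ. rewrite Q2R_Qsum, Rmult_assoc. f_equal.
  rewrite sum_n_scal_R. apply sum_n_ext_loc. intros nu Hnu.
  rewrite Q2R_Qred, !Q2R_mult, Q2R_resQ, Cbar_Q by exact Hnu.
  replace ((Nfrak g * Nfrak g * Nfrak nu * (PI * Q2R (cbarQ g g nu))) ^ 2)
    with (Nfrak g ^ 4 * PI ^ 2 * Nfrak nu ^ 2 * (Q2R (cbarQ g g nu) * Q2R (cbarQ g g nu))) by ring.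
  rewrite Nfrak_sq. simpl. unfold Rdiv. ring.
Qed.

Definition lemma6p6_certificate (g : nat) : bool :=
  negb (Qle_bool (c4Q g) 0) && Qle_bool (3 * c4Q g * ((83 # 50) * (83 # 50))) (54 * qQ g).

Lemma lemma6p6_certificate_ok g : (g <= 5)%nat -> lemma6p6_certificate g = true.
Proof. intro H. do 6 (destruct g as [|g]; [vm_compute; reflexivity|]). lia. Qed.

(* After the common factor [Nfrak g ^ 4 * PI / Gamma (5/2) ^ 2] is removed, the certificate
   suffices because [Gamma (5/2) <= 83/50] and [PI > 3]. *)
Lemma qfrak_gt_C4 g : lemma6p6_certificate g = true -> 8 * qfrak g > 3 * C4 g g g g.
Proof.
  intro Hc. unfold lemma6p6_certificate in Hc. apply andb_prop in Hc as [H1 H2].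
  assert (Hd : 0 < Q2R (c4Q g)).
  { rewrite <- RMicromega.Q2R_0. apply Qlt_Rlt, Qnot_le_lt. intro Hle.
    apply Qle_bool_iff in Hle. rewrite Hle in H1. discriminate. }
  assert (HS : 3 * Q2R (c4Q g) * ((83 / 50) * (83 / 50)) <= 54 * Q2R (qQ g)).
  { apply Qle_bool_iff, Qle_Rle in H2. rewrite !Q2R_mult, !Q2R_lit in H2. lra. }
  rewrite qfrak_Q, C4_Q.
  destruct (proj2 is_RInt_gen_Gamma_52) as [HG1 HG2].
  pose proof (Nfrak_pos g) as HN. pose proof PI2_3_2 as Hpi.
  set (G := Gamma (5 / 2)) in *. set (N := Nfrak g) in *.
  set (S := Q2R (qQ g)) in *. set (d := Q2R (c4Q g)) in *.
  assert (HN4 : 0 < N ^ 4) by (apply pow_lt, HN).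
  assert (HG : 0 < G ^ 2 <= (83 / 50) * (83 / 50)) by (split; nra).
  assert (Hkey : 3 * d * G ^ 2 < 18 * PI * S) by nra.
  apply Rlt_gt.
  replace (8 * (9 / 4 * (N ^ 4 * PI ^ 2 / G ^ 2) * S)) with ((N ^ 4 * PI / G ^ 2) * (18 * PI * S))
    by (field; lra).
  replace (3 * (N ^ 4 * (PI * d))) with ((N ^ 4 * PI / G ^ 2) * (3 * d * G ^ 2)) by (field; lra).
  apply Rmult_lt_compat_l; [|exact Hkey].
  apply Rdiv_lt_0_compat; [apply Rmult_lt_0_compat|]; lra.
Qed.

(** * Time averages *)

Lemma is_RInt_cos_int (z : Z) :
  is_RInt (fun t => cos (IZR z * t)) 0 (2 * PI) (if Z.eq_dec z 0 then 2 * PI else 0).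
Proof.
  destruct (Z.eq_dec z 0) as [->|Hz].
  - replace (2 * PI) with (scal (2 * PI - 0) 1) at 2 by (unfold scal; simpl; unfold mult; simpl; ring).
    apply (is_RInt_ext (fun _ => 1)); [intros; rewrite Rmult_0_l, cos_0; reflexivity|].
    apply (is_RInt_const (V := R_NormedModule)).
  - assert (Hc : IZR z <> 0) by (apply not_0_IZR, Hz).
    set (F := fun t => sin (IZR z * t) / IZR z).
    assert (E : minus (F (2 * PI)) (F 0) = 0).
    { unfold F. rewrite Rmult_0_r, sin_0, (sin_eq_0_1 (IZR z * (2 * PI))).
      - unfold minus, plus, opp; simpl. field. exact Hc.
      - exists (2 * z)%Z. rewrite mult_IZR. ring. }
    enough (H : is_RInt (fun t => cos (IZR z * t)) 0 (2 * PI) (minus (F (2 * PI)) (F 0)))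
      by (rewrite E in H; exact H).
    apply (is_RInt_derive (V := R_CompleteNormedModule) F).
    + intros x _. unfold F. auto_derive; [easy|]. field. exact Hc.
    + intros x _. apply continuous_cos_comp, (continuous_mult (K := R_AbsRing) (fun _ => IZR z));
        [apply continuous_const|apply continuous_id].
Qed.

Lemma cos3_mul_cos a b :
  cos a ^ 3 * cos b = (3 * cos (a - b) + 3 * cos (a + b) + cos (3 * a - b) + cos (3 * a + b)) / 8.
Proof.
  assert (H3 : cos (3 * a) = 4 * cos a ^ 3 - 3 * cos a).
  { replace (3 * a) with (2 * a + a) by ring.
    rewrite cos_plus, cos_2a_cos, sin_2a.
    transitivity ((2 * cos a * cos a - 1) * cos a - 2 * sin a ^ 2 * cos a); [ring|].
    rewrite sin_sq. ring. }
  rewrite !cos_minus, !cos_plus, H3. field.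
Qed.

Definition int_cos (z : Z) : R := if Z.eq_dec z 0 then 2 * PI else 0.

Lemma RInt_cos3_cos g m :
  RInt (fun t => cos (omega g * t) ^ 3 * cos (omega m * t)) 0 (2 * PI)
  = (3 * int_cos (Z.of_nat g - Z.of_nat m) + 3 * int_cos (Z.of_nat g + Z.of_nat m + 4)
     + int_cos (3 * Z.of_nat g + 4 - Z.of_nat m) + int_cos (3 * Z.of_nat g + Z.of_nat m + 8)) / 8.
Proof.
  apply is_RInt_unique.
  set (z1 := (Z.of_nat g - Z.of_nat m)%Z). set (z2 := (Z.of_nat g + Z.of_nat m + 4)%Z).
  set (z3 := (3 * Z.of_nat g + 4 - Z.of_nat m)%Z). set (z4 := (3 * Z.of_nat g + Z.of_nat m + 8)%Z).
  pose proof (is_RInt_scal (V := R_NormedModule) _ 0 (2 * PI) (/ 8) _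
     (is_RInt_plus (V := R_NormedModule) _ _ 0 (2 * PI) _ _
       (is_RInt_plus (V := R_NormedModule) _ _ 0 (2 * PI) _ _
         (is_RInt_plus (V := R_NormedModule) _ _ 0 (2 * PI) _ _
            (is_RInt_scal (V := R_NormedModule) _ 0 (2 * PI) 3 _ (is_RInt_cos_int z1))
            (is_RInt_scal (V := R_NormedModule) _ 0 (2 * PI) 3 _ (is_RInt_cos_int z2)))
         (is_RInt_cos_int z3))
       (is_RInt_cos_int z4))) as H.
  unfold plus, scal in H; simpl in H; unfold mult in H; simpl in H.
  replace ((3 * int_cos z1 + 3 * int_cos z2 + int_cos z3 + int_cos z4) / 8)
    with (/ 8 * (3 * int_cos z1 + 3 * int_cos z2 + int_cos z3 + int_cos z4)) by field.
  eapply is_RInt_ext; [|exact H]. intros t _.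
  rewrite cos3_mul_cos. unfold z1, z2, z3, z4, omega.
  rewrite ?minus_IZR, ?plus_IZR, ?mult_IZR, <- !INR_IZR_INZ.
  replace ((INR g + 2) * t - (INR m + 2) * t) with ((INR g - INR m) * t) by ring.
  replace ((INR g + 2) * t + (INR m + 2) * t) with ((INR g + INR m + 4) * t) by ring.
  replace (3 * ((INR g + 2) * t) - (INR m + 2) * t) with ((3 * INR g + 4 - INR m) * t) by ring.
  replace (3 * ((INR g + 2) * t) + (INR m + 2) * t) with ((3 * INR g + INR m + 8) * t) by ring.
  simpl. field.
Qed.

Lemma int_cos_neq0 z : z <> 0%Z -> int_cos z = 0.
Proof. intro H. unfold int_cos. destruct (Z.eq_dec z 0); [contradiction|reflexivity]. Qed.

Lemma RInt_cos3_cos_self g :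
  RInt (fun t => cos (omega g * t) ^ 3 * cos (omega g * t)) 0 (2 * PI) = 3 * PI / 4.
Proof.
  rewrite RInt_cos3_cos, (int_cos_neq0 (Z.of_nat g + Z.of_nat g + 4)),
    (int_cos_neq0 (3 * Z.of_nat g + 4 - Z.of_nat g)), (int_cos_neq0 (3 * Z.of_nat g + Z.of_nat g + 8))
    by lia.
  rewrite Z.sub_diag. unfold int_cos. simpl. field.
Qed.

Lemma RInt_cos3_cos_eq0 g m : m <> g -> m <> (3 * g + 4)%nat ->
  RInt (fun t => cos (omega g * t) ^ 3 * cos (omega m * t)) 0 (2 * PI) = 0.
Proof. intros H1 H2. rewrite RInt_cos3_cos, !int_cos_neq0 by lia. simpl. field. Qed.

(** * Evaluation of [M_minus] on a single mode *)

Definition mode (g : nat) (K : R) : seqR := fun n => if Nat.eqb n g then K else 0.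

Lemma mode_neq g K n : n <> g -> mode g K n = 0.
Proof. intro H. unfold mode. apply Nat.eqb_neq in H. rewrite H. reflexivity. Qed.

Lemma mode_eq g K : mode g K g = K.
Proof. unfold mode. rewrite Nat.eqb_refl. reflexivity. Qed.

Lemma mode_prod3_eq0 g K i j k : i <> g \/ j <> g \/ k <> g -> mode g K i * mode g K j * mode g K k = 0.
Proof. intros [H|[H|H]]; rewrite (mode_neq g K _ H); ring. Qed.

Lemma avg_f3_mode g K m : avg_f3 (mode g K) m
  = - C4 g g g m * K ^ 3
    * RInt (fun t => cos (omega g * t) ^ 3 * cos (omega m * t)) 0 (2 * PI) / (2 * PI).
Proof.
  unfold avg_f3, Phi, f3.
  rewrite (RInt_ext _ (fun t => (- C4 g g g m * K ^ 3) * (cos (omega g * t) ^ 3 * cos (omega m * t)))).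
  - rewrite (RInt_scal (V := R_CompleteNormedModule)).
    + pose proof PI_RGT_0. unfold scal; simpl; unfold mult; simpl. field. lra.
    + apply (ex_RInt_continuous (V := R_CompleteNormedModule)). intros t _.
      apply (ex_derive_continuous (K := R_AbsRing) (V := R_NormedModule)).
      apply ex_derive_Reals_1. reg.
  - intros t _.
    rewrite (Series3_single g (fun i j k => C4 i j k m * (mode g K i * cos (omega i * t))
               * (mode g K j * cos (omega j * t)) * (mode g K k * cos (omega k * t)))).
    + rewrite mode_eq. simpl. ring.
    + intros i j k H.
      transitivity (C4 i j k m * (mode g K i * mode g K j * mode g K k)
                    * (cos (omega i * t) * cos (omega j * t) * cos (omega k * t))); [ring|].
      rewrite mode_prod3_eq0 by exact H. ring.
Qed.

Lemma F0_mode g K m : F0 (mode g K) m =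
  9 / 4 * sum_n (fun nu => Cbar g nu m * (res_coef nu (omega g - omega g) * Cbar g g nu * K * K * K
                                          * sum_pm (omega g - omega g) (omega g) (omega m))) (2 * g) +
  9 / 4 * sum_n (fun nu => Cbar g nu m * (res_coef nu (omega g + omega g) * Cbar g g nu * K * K * K
                                          * sum_pm (omega g + omega g) (omega g) (omega m))) (2 * g).
Proof.
  unfold F0. rewrite !(Series4_single g (2 * g) (fun k nu => Cbar k nu m)).
  - rewrite !mode_eq. reflexivity.
  - intros k nu i j H.
    transitivity (res_coef nu (omega i + omega j) * Cbar i j nu
                  * sum_pm (omega i + omega j) (omega k) (omega m)
                  * (mode g K i * mode g K j * mode g K k)); [ring|].
    rewrite mode_prod3_eq0 by exact H. ring.
  - intros nu Hnu. rewrite (Cbar_eq0 g g nu) by lia. ring.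
  - intros k nu i j H.
    transitivity (res_coef nu (omega i - omega j) * Cbar i j nu
                  * sum_pm (omega i - omega j) (omega k) (omega m)
                  * (mode g K i * mode g K j * mode g K k)); [ring|].
    rewrite mode_prod3_eq0 by exact H. ring.
  - intros nu Hnu. rewrite (Cbar_eq0 g g nu) by lia. ring.
Qed.

Lemma omega_pos n : 0 < omega n.
Proof. unfold omega. pose proof (pos_INR n). lra. Qed.

Lemma omega_gap g nu : (nu <= 2 * g)%nat -> omega nu ^ 2 - (2 * omega g) ^ 2 < 0.
Proof.
  intro H. apply le_INR in H. rewrite mult_INR in H. simpl INR in H.
  unfold omega. pose proof (pos_INR nu). nra.
Qed.

Lemma ind0_0 : ind0 0 = 1.
Proof. unfold ind0. destruct (Req_EM_T 0 0); [reflexivity|lra]. Qed.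

Lemma ind0_neq0 x : x <> 0 -> ind0 x = 0.
Proof. intro H. unfold ind0. destruct (Req_EM_T x 0); [contradiction|reflexivity]. Qed.

Lemma sum_pm_diff_self g : sum_pm (omega g - omega g) (omega g) (omega g) = 2.
Proof.
  unfold sum_pm. pose proof (omega_pos g).
  replace (omega g - omega g + omega g - omega g) with 0 by ring.
  replace (omega g - omega g - omega g + omega g) with 0 by ring.
  rewrite ind0_0, !ind0_neq0 by lra. ring.
Qed.

Lemma sum_pm_diff_neq g m : m <> g -> sum_pm (omega g - omega g) (omega g) (omega m) = 0.
Proof.
  intro H. apply not_INR in H. unfold sum_pm, omega.
  pose proof (pos_INR g). pose proof (pos_INR m). rewrite !ind0_neq0 by lra. ring.
Qed.

Lemma sum_pm_sum_self g : sum_pm (omega g + omega g) (omega g) (omega g) = 1.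
Proof.
  unfold sum_pm. pose proof (omega_pos g).
  replace (omega g + omega g - omega g - omega g) with 0 by ring.
  rewrite ind0_0, !ind0_neq0 by lra. ring.
Qed.

Lemma sum_pm_sum_neq g m : m <> g -> m <> (3 * g + 4)%nat ->
  sum_pm (omega g + omega g) (omega g) (omega m) = 0.
Proof.
  intros H1 H2. apply not_INR in H1, H2. rewrite plus_INR, mult_INR in H2. simpl INR in H2.
  unfold sum_pm, omega. pose proof (pos_INR g). pose proof (pos_INR m).
  rewrite !ind0_neq0 by lra. ring.
Qed.

Lemma res_coef_diff g nu : res_coef nu (omega g - omega g) = / omega nu ^ 2.
Proof.
  unfold res_coef. pose proof (omega_pos nu). rewrite Rminus_diag.
  destruct (Req_EM_T 0 (omega nu)); [lra|]. destruct (Req_EM_T 0 (- omega nu)); [lra|].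
  f_equal. ring.
Qed.

Lemma res_coef_sum g nu : (nu <= 2 * g)%nat ->
  res_coef nu (omega g + omega g) = / (omega nu ^ 2 - (2 * omega g) ^ 2).
Proof.
  intro H. pose proof (omega_gap g nu H). pose proof (omega_pos nu). pose proof (omega_pos g).
  unfold res_coef.
  destruct (Req_EM_T (omega g + omega g) (omega nu)) as [E|E]; [rewrite <- E in *; nra|].
  destruct (Req_EM_T (omega g + omega g) (- omega nu)); [lra|].
  f_equal. ring.
Qed.

Lemma Cbar_sym i j m : Cbar i j m = Cbar i m j.
Proof. unfold Cbar. apply RInt_ext. intros x _. simpl. ring. Qed.

Lemma M_minus_mode_self g K :
  M_minus (mode g K) g = K * (K ^ 2 * (qfrak g - 3 / 8 * C4 g g g g) - omega g ^ 2).
Proof.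
  unfold M_minus, Aop. rewrite avg_f3_mode, F0_mode, RInt_cos3_cos_self, mode_eq.
  rewrite <- Rmult_plus_distr_l, sum_n_plus_R.
  rewrite (sum_n_ext_loc _ (fun nu => K ^ 3 * (Cbar g g nu ^ 2 * (2 / omega nu ^ 2
                                         + 1 / (omega nu ^ 2 - (2 * omega g) ^ 2))))).
  - rewrite <- sum_n_scal_R. unfold qfrak. pose proof PI_RGT_0. field. lra.
  - intros nu Hnu. simpl.
    rewrite sum_pm_diff_self, sum_pm_sum_self, res_coef_diff, res_coef_sum, <- Cbar_sym by exact Hnu.
    pose proof (omega_pos nu). pose proof (omega_gap g nu Hnu). field. lra.
Qed.

Lemma M_minus_mode_other g K m : m <> g -> M_minus (mode g K) m = 0.
Proof.
  intro Hm. unfold M_minus, Aop. rewrite avg_f3_mode, F0_mode, mode_neq by exact Hm.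
  assert (Havg : C4 g g g m * RInt (fun t => cos (omega g * t) ^ 3 * cos (omega m * t)) 0 (2 * PI) = 0).
  { destruct (Nat.eq_dec m (3 * g + 4)) as [E|E].
    - rewrite C4_eq0 by lia. ring.
    - rewrite RInt_cos3_cos_eq0 by assumption. ring. }
  rewrite !sum_n_eq0.
  - set (I := RInt (fun t => cos (omega g * t) ^ 3 * cos (omega m * t)) 0 (2 * PI)) in *.
    replace (- C4 g g g m * K ^ 3 * I / (2 * PI)) with (- (C4 g g g m * I) * K ^ 3 / (2 * PI))
      by (unfold Rdiv; ring).
    rewrite Havg. unfold Rdiv. ring.
  - intros nu Hnu. destruct (Nat.eq_dec m (3 * g + 4)) as [->|E].
    + rewrite Cbar_eq0 by lia. ring.
    + rewrite sum_pm_sum_neq by assumption. ring.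
  - intros nu _. rewrite sum_pm_diff_neq by exact Hm. ring.
Qed.

Lemma sqr_pm_sqrt c D K : 0 < D -> (K = c * sqrt (2 / D) \/ K = - (c * sqrt (2 / D))) ->
  K ^ 2 = 2 * c ^ 2 / D.
Proof.
  intros HD HK.
  assert (Hs : sqrt (2 / D) * sqrt (2 / D) = 2 / D)
    by (apply sqrt_sqrt; left; apply Rdiv_lt_0_compat; lra).
  destruct HK as [-> | ->];
    (transitivity (c ^ 2 * (sqrt (2 / D) * sqrt (2 / D))); [ring|]); rewrite Hs; field; lra.
Qed.

Theorem lemma6p6 (g : nat) (Hg : (g <= 5)%nat) :
  8 * qfrak g > 3 * C4 g g g g /\
  forall K : R,
    (K = 2 * omega g * sqrt (2 / (8 * qfrak g - 3 * C4 g g g g)) \/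
     K = - (2 * omega g * sqrt (2 / (8 * qfrak g - 3 * C4 g g g g)))) ->
    forall m : nat, M_minus (fun n => if Nat.eqb n g then K else 0) m = 0.
Proof.
  pose proof (qfrak_gt_C4 g (lemma6p6_certificate_ok g Hg)) as Hpos.
  split; [exact Hpos|]. intros K HK m.
  change (M_minus (mode g K) m = 0).
  destruct (Nat.eq_dec m g) as [->|Hm]; [|apply M_minus_mode_other, Hm].
  apply sqr_pm_sqrt in HK; [|lra].
  rewrite M_minus_mode_self, HK. field. lra.
Qed.
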